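(* Assume conditions (C1) and (C2) hold, and suppose $p_n\ge0$, $\mu_n\ge 0$ with $\sum_n p_n<\infty$. Let $\{w_n\},\{y_n\}$ be generated by Algorithm 3.1. If $\lim_{n\to\infty}\|w_n-y_n\|=0$ and $\{w_n\}$ converges weakly to some $z\in H$, then $z\in\Omega$.
   Context: Let $H$ be a real Hilbert space, $A:H\to H$ a single-valued mapping and $B:H\to 2^H$ a set-valued mapping, and let $\Omega:=(A+B)^{-1}(0)=\{x\in H:\ 0\in Ax+Bx\}$. Algorithm 3.1 is the following iteration. Fix $x_0,x_1\in H$, $\mu\in(0,1)$, $\lambda_1>0$, real sequences $\{\alpha_n\},\{\beta_n\},\{\theta_n\}$ and nonnegative real sequences $\{\mu_n\},\{p_n\}$. For $n=1,2,\dots$ compute $w_n=x_n+\alpha_n(x_n-x_{n-1})$, $z_n=x_n+\beta_n(x_n-x_{n-1})$, $y_n=(I+\lambda_nB)^{-1}(I-\lambda_nA)w_n$, and set $\lambda_{n+1}=\min\{(\mu_n+\mu)\|w_n-y_n\|/\|Aw_n-Ay_n\|,\ \lambda_n+p_n\}$ if $Aw_n\neq Ay_n$, and $\lambda_{n+1}=\lambda_n+p_n$ otherwise. If $w_n=y_n$ the algorithm stops (then $y_n\in\Omega$). Otherwise set $x_{n+1}=(1-\theta_n)z_n+\theta_n\big(y_n-\lambda_n(Ay_n-Aw_n)\big)$ and continue. Here $I$ is the identity and $(I+\lambda B)^{-1}$ is the resolvent of $B$. Throughout, it is assumed that the algorithm does not stop, so that infinite sequences $\{x_n\},\{w_n\},\{z_n\},\{y_n\},\{\lambda_n\}$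 are generated. Condition (C1): $\Omega\neq\emptyset$. Condition (C2): $A$ is $L$-Lipschitz continuous and monotone, and $B$ is maximal monotone. *)

From HB Require Import structures.
From mathcomp Require Import all_boot all_order all_algebra.
From mathcomp Require Import all_classical all_reals all_analysis.
Set Implicit Arguments. Unset Strict Implicit. Unset Printing Implicit Defensive.
Import Order.TTheory GRing.Theory Num.Theory.
Import numFieldNormedType.Exports.
Local Open Scope classical_set_scope.
Local Open Scope ring_scope.

(* A real Hilbert space is modelled as a complete normed space H over R together
   with an inner product ip inducing its norm. *)
Record is_inner_product (R : realType) (H : completeNormedModType R)
  (ip : H -> H -> R) : Prop := {
  ip_sym : forall x y, ip x y = ip y x;
  ip_linl : forall (a : R) x y z, ip (a *: x + y) z = a * ip x z + ip y z;
  ip_norm : forall x, ip x x = `|x| ^+ 2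
}.

Section Ops.
Context {R : realType} {H : completeNormedModType R} (ip : H -> H -> R).

Definition lipschitz_with (L : R) (A : H -> H) : Prop :=
  forall x y, `|A x - A y| <= L * `|x - y|.

Definition monotone_op (A : H -> H) : Prop :=
  forall x y, 0 <= ip (A x - A y) (x - y).

Definition monotone_setop (B : H -> set H) : Prop :=
  forall x y u v, B x u -> B y v -> 0 <= ip (u - v) (x - y).

Definition maximal_monotone (B : H -> set H) : Prop :=
  monotone_setop B /\
  forall B' : H -> set H, monotone_setop B' ->
    (forall x, B x `<=` B' x) -> forall x, B' x = B x.

Definition resolvent_rel (B : H -> set H) (lam : R) (x y : H) : Prop :=
  exists u, B y u /\ x = y + lam *: u.

Definition zeros_sum (A : H -> H) (B : H -> set H) : set H :=
  [set x | exists u, B x u /\ A x + u = 0].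

Definition weakly_converges (w : nat -> H) (z : H) : Prop :=
  forall v, (fun n => ip (w n) v) @ \oo --> ip z v.
End Ops.

From HB Require Import structures.
From mathcomp Require Import all_boot all_order all_algebra.
From mathcomp Require Import all_classical all_reals all_analysis.
From mathcomp Require Import ring lra.
Set Implicit Arguments. Unset Strict Implicit. Unset Printing Implicit Defensive.
Import Order.TTheory GRing.Theory Num.Theory.
Import numFieldNormedType.Exports.
Local Open Scope classical_set_scope.
Local Open Scope ring_scope.

(* The step sizes stay above [min lam1 (mu / L)], since the adaptive rule
   divides by [|A w_n - A y_n| <= L |w_n - y_n|].  The resolvent step yields
   [b_n \in B y_n] with [|b_n + A y_n| <= (1/lam_n + L) |w_n - y_n| -> 0], and
   the weakly convergent [w_n] is bounded (uniform boundedness), so monotonicity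
   of [A + B] passes to the limit: [<v + A u, u - z> >= 0] whenever [v \in B u].
   As [A] is Lipschitz and [B] maximal monotone, [A + B] is maximal monotone,
   which puts [z] in [Omega]: the point [u = J (z - lam A u)], obtained from
   Banach's fixed point theorem with [J] the resolvent of [B], must equal [z].
   The resolvent is total by Minty's theorem, proved here by minimising the
   Fitzpatrick function plus half the squared norm, a uniformly convex
   functional on [H * H]. *)

Section InnerProduct.
Context {R : realType} {H : completeNormedModType R} {ip : H -> H -> R}.
Hypothesis hip : is_inner_product ip.

Lemma ipDl x y z : ip (x + y) z = ip x z + ip y z.
Proof. by have := ip_linl hip 1 x y z; rewrite scale1r mul1r. Qed.

Lemma ip0l z : ip 0 z = 0.
Proof. by apply: (@addrI _ (ip 0 z)); rewrite addr0 -ipDl addr0. Qed.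

Lemma ipZl a x z : ip (a *: x) z = a * ip x z.
Proof. by rewrite -[a *: x]addr0 (ip_linl hip) ip0l addr0. Qed.

Lemma ipNl x z : ip (- x) z = - ip x z.
Proof. by rewrite -scaleN1r ipZl mulN1r. Qed.

Lemma ipBl x y z : ip (x - y) z = ip x z - ip y z.
Proof. by rewrite ipDl ipNl. Qed.

Lemma ipDr x y z : ip z (x + y) = ip z x + ip z y.
Proof. by rewrite (ip_sym hip) ipDl !(ip_sym hip z). Qed.

Lemma ipZr a x z : ip z (a *: x) = a * ip z x.
Proof. by rewrite (ip_sym hip) ipZl (ip_sym hip z). Qed.

Lemma ipNr x z : ip z (- x) = - ip z x.
Proof. by rewrite (ip_sym hip) ipNl (ip_sym hip z). Qed.

Lemma ipBr x y z : ip z (x - y) = ip z x - ip z y.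
Proof. by rewrite ipDr ipNr. Qed.

Lemma ipxx_ge0 x : 0 <= ip x x.
Proof. by rewrite (ip_norm hip) sqr_ge0. Qed.

Lemma normr_ip_le x y : `|ip x y| <= `|x| * `|y|.
Proof.
have [->|xn0] := eqVneq x 0; first by rewrite ip0l !normr0 mul0r.
have nx : 0 < `|x| by rewrite normr_gt0.
(* the discriminant argument, with the optimal [t] substituted *)
set t := ip x y / `|x| ^+ 2.
have h : 0 <= ip (t *: x - y) (t *: x - y) by apply: ipxx_ge0.
rewrite !ipBl !ipBr !ipZl !ipZr (ip_sym hip y x) !(ip_norm hip) in h.
have e1 : t * (t * `|x| ^+ 2) = ip x y ^+ 2 / `|x| ^+ 2.
  by rewrite /t; field; rewrite gt_eqF.
have e2 : t * ip x y = ip x y ^+ 2 / `|x| ^+ 2.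
  by rewrite /t; field; rewrite gt_eqF.
have : ip x y ^+ 2 / `|x| ^+ 2 <= `|y| ^+ 2 by lra.
rewrite ler_pdivrMr ?exprn_gt0 // -exprMn mulrC -real_normK ?num_real //.
by rewrite ler_sqr ?nnegrE ?mulr_ge0.
Qed.

Lemma ip_le_norm x y : ip x y <= `|x| * `|y|.
Proof. exact: le_trans (ler_norm _) (normr_ip_le x y). Qed.

Lemma ip_ge_Nnorm x y : - (`|x| * `|y|) <= ip x y.
Proof. by have := normr_ip_le x y; rewrite ler_norml => /andP[]. Qed.

Lemma cvg_ipl (f : nat -> H) x c : f @ \oo --> x ->
  (fun k => ip (f k) c) @ \oo --> ip x c.
Proof.
move=> fx; apply/cvgrPdist_lt => e e0.
have c1 : 0 < `|c| + 1 by rewrite ltr_pwDr.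
move/cvgrPdist_lt: fx => /(_ (e / (`|c| + 1))); rewrite divr_gt0 // => /(_ isT).
apply: filterS => k hk; rewrite -ipBl; apply: le_lt_trans (normr_ip_le _ _) _.
apply: (@le_lt_trans _ _ (e / (`|c| + 1) * `|c|)); first exact/ler_wpM2r/ltW.
by rewrite mulrAC ltr_pdivrMr // ltr_pM2l // ltrDl.
Qed.

Lemma cvg_ipr (f : nat -> H) x c : f @ \oo --> x ->
  (fun k => ip c (f k)) @ \oo --> ip c x.
Proof.
move=> fx; rewrite (ip_sym hip); under eq_fun do rewrite (ip_sym hip).
exact: cvg_ipl.
Qed.

Lemma weakly_converges_bounded (w : nat -> H) z : weakly_converges ip w z ->
  exists M, forall n, `|w n| <= M.
Proof.
move=> wz.
pose F : set (H -> R^o) := [set f | exists n, f = (fun v => ip (w n) v : R^o)].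
have Flin : forall f, F f -> bounded_fun_norm f /\ linear f.
  move=> f [n ->]; split; last by move=> a u v; rewrite /= ipDr ipZr.
  move=> r; exists (`|w n| * r) => v vr.
  exact: le_trans (normr_ip_le (w n) v) (ler_wpM2l _ vr).
have Fptw : pointwise_bounded F.
  move=> v; have cv : cvgn (fun n => ip (w n) v).
    by apply/cvg_ex; exists (ip z v); exact: wz.
  have [M0 [_ hM0]] := cvg_seq_bounded cv.
  exists (M0 + 1) => f [n ->] /=.
  by apply: (hM0 (M0 + 1)) => //; rewrite ltrDl.
have [K hK] := Banach_Steinhauss Flin Fptw 1.
exists K => n; have Fn : F (fun v => ip (w n) v) by exists n.
have [w0|wn0] := eqVneq (w n) 0.
  by rewrite w0 normr0; apply: le_trans (hK _ Fn 0 _) => //; rewrite normr0.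
have nw : 0 < `|w n| by rewrite normr_gt0.
(* test the functional [ip (w n)] against the unit vector in direction [w n] *)
have := hK _ Fn (`|w n|^-1 *: w n).
rewrite normrZ ger0_norm ?invr_ge0 // mulVf ?gt_eqF // lexx => /(_ isT).
rewrite /= ipZr (ip_norm hip) ger0_norm; last by rewrite mulr_ge0 ?invr_ge0 ?sqr_ge0.
by rewrite expr2 mulrA mulVf ?gt_eqF // mul1r.
Qed.

End InnerProduct.

Lemma ge0_lin_coef {R : realType} (C D : R) : 0 <= D ->
  (forall t, 0 < t <= 1 -> 0 <= t * C + t ^+ 2 * D) -> 0 <= C.
Proof.
move=> D0 h; rewrite leNgt; apply/negP => C0.
have DC : 0 < D - C by lra.
pose t := - C / (D - C).
have t0 : 0 < t by rewrite divr_gt0 ?oppr_gt0.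
have t1 : t <= 1 by rewrite ler_pdivrMr //; lra.
have := h t; rewrite t0 t1 => /(_ isT).
have -> : t * C + t ^+ 2 * D = - t * (C ^+ 2 / (D - C)).
  by rewrite /t; field; rewrite gt_eqF.
rewrite mulNr oppr_ge0 pmulr_rle0 // leNgt divr_gt0 // expr2 nmulr_rgt0 //.
Qed.

Lemma cvgn_sqr_dist_le {R : realType} {H : completeNormedModType R}
  (f : nat -> H) (e : nat -> R) : e @ \oo --> 0 ->
  (forall k l, `|f k - f l| ^+ 2 <= e k + e l) -> cvgn f.
Proof.
move=> e0 hf; apply: cauchy_cvg; apply/cauchy_exP => eps eps0.
have e2 : 0 < eps ^+ 2 / 2 by rewrite divr_gt0 ?exprn_gt0.
move/cvgrPdist_lt: e0 => /(_ _ e2) [N _ hN].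
rewrite /fmapE -ball_normE /ball_; exists (f N), N => // k /= Nk.
have := hf N k; have := hN N (leqnn N); have := hN k Nk.
rewrite !sub0r !normrN => ek eN fNk.
have : `|f N - f k| ^+ 2 < eps ^+ 2.
  by apply: le_lt_trans fNk _; move: (ler_norm (e N)) (ler_norm (e k)); lra.
by rewrite -(ltr_pXn2r (_ : (0 < 2)%N)) ?nnegrE // ltW.
Qed.

(* For a monotone relation [S], [p |-> sup_{S a a'} minty_fun ip a a' p] is
   its Fitzpatrick function plus half the squared norm of [p]. *)
Definition minty_fun {R : realType} {H : completeNormedModType R}
  (ip : H -> H -> R) (a a' p1 p2 : H) : R :=
  ip p1 a' + ip a p2 - ip a a' + (`|p1| ^+ 2 + `|p2| ^+ 2) / 2.

Section MintyFun.
Context {R : realType} {H : completeNormedModType R} {ip : H -> H -> R}.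
Hypothesis hip : is_inner_product ip.

Lemma minty_fun_midpoint a a' x1 x2 y1 y2 :
  minty_fun ip a a' ((1/2) *: (x1 + y1)) ((1/2) *: (x2 + y2)) =
  (minty_fun ip a a' x1 x2 + minty_fun ip a a' y1 y2) / 2
    - (`|x1 - y1| ^+ 2 + `|x2 - y2| ^+ 2) / 8.
Proof.
rewrite /minty_fun -!(ip_norm hip).
rewrite !(ipZl hip, ipZr hip, ipDl hip, ipDr hip, ipNl hip, ipNr hip).
have := ip_sym hip x1 y1; have := ip_sym hip x2 y2; lra.
Qed.

Lemma cvg_minty_fun a a' (f1 f2 : nat -> H) x1 x2 :
  f1 @ \oo --> x1 -> f2 @ \oo --> x2 ->
  (fun k => minty_fun ip a a' (f1 k) (f2 k)) @ \oo --> minty_fun ip a a' x1 x2.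
Proof.
move=> c1 c2; rewrite /minty_fun; rewrite !expr2.
under eq_fun do rewrite !expr2.
apply: cvgD; last by apply: cvgMr_tmp; apply: cvgD; apply: cvgM; apply: cvg_norm.
apply: cvgB; last exact: cvg_cst.
by apply: cvgD; [apply: (cvg_ipl hip) | apply: (cvg_ipr hip)].
Qed.

End MintyFun.

Section Minty.
Context {R : realType} {H : completeNormedModType R} {ip : H -> H -> R}.
Hypothesis hip : is_inner_product ip.
Variable S : H -> H -> Prop.
Hypothesis Smono : forall a a' b b', S a a' -> S b b' -> 0 <= ip (a' - b') (a - b).
Hypothesis Sne : exists a a', S a a'.

Let E := [set c | exists p1 p2, forall a a', S a a' -> minty_fun ip a a' p1 p2 <= c].
Let m := inf E.

Let has_inf_E : has_inf E.
Proof.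
have [a0 [a0' s0]] := Sne; split.
  exists (ip a0 a0' + (`|a0| ^+ 2 + `|a0'| ^+ 2) / 2), a0, a0' => a a' s.
  have := Smono s0 s; rewrite /minty_fun (ipBl hip) !(ipBr hip).
  have := ip_sym hip a0' a0; have := ip_sym hip a0' a; have := ip_sym hip a' a0.
  have := ip_sym hip a' a; lra.
exists (- (`|a0| ^+ 2 + `|a0'| ^+ 2) / 2 - ip a0 a0') => c [p1 [p2 hp]].
have := hp _ _ s0; rewrite /minty_fun.
have h1 := ipxx_ge0 hip (p1 + a0'); have h2 := ipxx_ge0 hip (p2 + a0).
rewrite !(ipDl hip) !(ipDr hip) !(ip_norm hip) in h1 h2.
have := ip_sym hip p1 a0'; have := ip_sym hip p2 a0; have := ip_sym hip a0 p2.
lra.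
Qed.

Let sup_minty_fun_ge p1 p2 eps : 0 < eps ->
  exists a a', S a a' /\ m - eps < minty_fun ip a a' p1 p2.
Proof.
move=> e0; apply/not_existsP => hn.
have : E (m - eps).
  exists p1, p2 => a a' s; rewrite leNgt; apply/negP => hlt.
  by apply: (hn a); exists a'.
by move/ge_inf => /(_ has_inf_E.2); lra.
Qed.

Let minty_minimizer :
  exists X1 X2, forall a a', S a a' -> minty_fun ip a a' X1 X2 <= m.
Proof.
have /choice[P hP] : forall k, exists p : H * H, forall a a', S a a' ->
    minty_fun ip a a' p.1 p.2 <= m + harmonic k.
  move=> k.
  have [c [p1 [p2 hp]] hc] := inf_adherent (harmonic_gt0 k) has_inf_E.
  by exists (p1, p2) => a a' s; apply: le_trans (hp _ _ s) (ltW hc).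
(* by the midpoint identity, two near-minimisers are close *)
have close k l : `|(P k).1 - (P l).1| ^+ 2 + `|(P k).2 - (P l).2| ^+ 2 <=
    4 * harmonic k + 4 * harmonic l.
  rewrite leNgt; apply/negP => hlt.
  set d := `|_ - _| ^+ 2 + _ in hlt.
  have pos : 0 < (d - (4 * harmonic k + 4 * harmonic l)) / 8.
    by rewrite divr_gt0 ?subr_gt0.
  have [a [a' [s]]] := sup_minty_fun_ge ((1/2) *: ((P k).1 + (P l).1))
     ((1/2) *: ((P k).2 + (P l).2)) pos.
  rewrite (minty_fun_midpoint hip) -/d.
  have := hP k a a' s; have := hP l a a' s; move: pos; lra.
have h4 : (fun k => 4 * harmonic k) @ \oo --> (0 : R).
  by rewrite -(mulr0 4); apply: cvgMl_tmp; exact: cvg_harmonic.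
have /cvg_ex[X1 cv1] : cvgn (fun k => (P k).1).
  apply: cvgn_sqr_dist_le h4 _ => k l; apply: le_trans (close k l).
  by rewrite lerDl sqr_ge0.
have /cvg_ex[X2 cv2] : cvgn (fun k => (P k).2).
  apply: cvgn_sqr_dist_le h4 _ => k l; apply: le_trans (close k l).
  by rewrite lerDr sqr_ge0.
exists X1, X2 => a a' s.
have : (fun k => minty_fun ip a a' (P k).1 (P k).2 - harmonic k) @ \oo -->
    minty_fun ip a a' X1 X2 - 0.
  by apply: cvgB; [exact: cvg_minty_fun | exact: cvg_harmonic].
rewrite subr0 => /cvgr_to_le; apply; apply: nearW => k.
by rewrite lerBlDr; exact: hP.
Qed.

(* First-order optimality of the minimiser in the direction of a point of [S]:
   along the segment towards [(b, b')] the linear part of [minty_fun] is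
   dominated, by monotonicity, by the chord from [m - |X|^2/2] to [ip b b']. *)
Let minimizer_variational X1 X2 :
  (forall a a', S a a' -> minty_fun ip a a' X1 X2 <= m) ->
  forall b b', S b b' ->
  0 <= - m + (`|X1| ^+ 2 + `|X2| ^+ 2) / 2 + ip b b'
       + (ip X1 (b - X1) + ip X2 (b' - X2)).
Proof.
move=> hX b b' sb.
pose NX := `|X1| ^+ 2 + `|X2| ^+ 2.
pose G := ip X1 (b - X1) + ip X2 (b' - X2).
pose D := `|b - X1| ^+ 2 + `|b' - X2| ^+ 2.
apply: (@ge0_lin_coef _ _ (D / 2)); first by rewrite divr_ge0 // addr_ge0 // sqr_ge0.
move=> t /andP[t0 t1].
pose Q1 := X1 + t *: (b - X1); pose Q2 := X2 + t *: (b' - X2).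
have NQ : `|Q1| ^+ 2 + `|Q2| ^+ 2 = NX + 2 * t * G + t ^+ 2 * D.
  rewrite /Q1 /Q2 /NX /G /D -!(ip_norm hip).
  rewrite !(ipZl hip, ipZr hip, ipDl hip, ipDr hip, ipNl hip, ipNr hip).
  rewrite (ip_sym hip X1 b) (ip_sym hip X2 b'); ring.
suff : m <= (1 - t) * (m - NX / 2) + t * ip b b' + (`|Q1| ^+ 2 + `|Q2| ^+ 2) / 2.
  by rewrite NQ /NX /G /D; lra.
rewrite leNgt; apply/negP => hlt; move: (hlt); rewrite -subr_gt0 => pos.
have [a [a' [s]]] := sup_minty_fun_ge Q1 Q2 pos.
have h1 := hX a a' s.
have h2 := Smono s sb.
rewrite (ipBl hip) !(ipBr hip) in h2.
have i1 : (1 - t) * (ip X1 a' + ip a X2 - ip a a') <= (1 - t) * (m - NX / 2).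
  by apply: ler_wpM2l; [lra | rewrite /minty_fun in h1; rewrite /NX; lra].
have i2 : t * (ip b a' + ip a b' - ip a a') <= t * ip b b'.
  apply: ler_wpM2l; first lra.
  have := ip_sym hip a' a; have := ip_sym hip a' b; have := ip_sym hip b' a.
  have := ip_sym hip b' b; lra.
rewrite /minty_fun /Q1 /Q2.
rewrite !(ipZl hip, ipZr hip, ipDl hip, ipDr hip, ipNl hip, ipNr hip).
move: hlt; rewrite /Q1 /Q2; lra.
Qed.

Lemma monotone_minty : exists u, forall a a', S a a' -> 0 <= ip (a' + u) (a - u).
Proof.
have [X1 [X2 hX]] := minty_minimizer.
exists ((1/2) *: (X1 - X2)) => b b' sb.
have hv := minimizer_variational hX sb.
have hb := hX b b' sb.
have hs := ipxx_ge0 hip (X1 + X2).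
move: hv hb hs; rewrite /minty_fun -!(ip_norm hip).
rewrite !(ipZl hip, ipZr hip, ipDl hip, ipDr hip, ipNl hip, ipNr hip).
have := ip_sym hip b' b; have := ip_sym hip b' X1; have := ip_sym hip b' X2.
have := ip_sym hip X2 b; have := ip_sym hip X1 X2; have := ip_sym hip X1 b.
lra.
Qed.

End Minty.

Section Resolvent.
Context {R : realType} {H : completeNormedModType R} {ip : H -> H -> R}.
Hypothesis hip : is_inner_product ip.
Variable B : H -> set H.

Lemma maximal_monotone_related (y c : H) : maximal_monotone ip B ->
  (forall p v, B p v -> 0 <= ip (v - c) (p - y)) -> B y c.
Proof.
move=> [Bmono Bmax] related.
pose B' : H -> set H := fun q => [set v | B q v \/ (q = y /\ v = c)].
have mB' : monotone_setop ip B'.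
  move=> a b v1 v2 [h1|[-> ->]] [h2|[-> ->]].
  - exact: Bmono.
  - exact: related.
  - by rewrite -opprB -(opprB b) (ipNl hip) (ipNr hip) opprK; apply: related.
  - by rewrite subrr (ip0l hip).
by rewrite -(Bmax B' mB' (fun q v hv => or_introl hv) y); right.
Qed.

Lemma maximal_monotone_graph_neq0 : maximal_monotone ip B -> exists a a', B a a'.
Proof.
move=> hB; apply/not_existsP => hn; apply: (hn 0); exists 0.
apply: maximal_monotone_related => // p v Bpv.
by exfalso; apply: (hn p); exists v.
Qed.

Lemma maximal_monotone_resolvent lam x : maximal_monotone ip B -> 0 < lam ->
  exists y, resolvent_rel B lam x y.
Proof.
move=> hB l0.
pose S a a' := exists b b', B b b' /\ a = b - x /\ a' = lam *: b'.
have Smono : forall a a' b b', S a a' -> S b b' -> 0 <= ip (a' - b') (a - b).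
  move=> a a' b b' [b1 [b1' [h1 [-> ->]]]] [b2 [b2' [h2 [-> ->]]]].
  rewrite -scalerBr (ipZl hip) opprB addrA subrK.
  by apply: mulr_ge0; [exact: ltW | exact: hB.1 h1 h2].
have Sne : exists a a', S a a'.
  have [a [a' h]] := maximal_monotone_graph_neq0 hB.
  by exists (a - x), (lam *: a'), a, a'.
have [u hu] := monotone_minty hip Smono Sne.
pose c := - (lam^-1 *: u).
have lc : lam *: c = - u by rewrite /c scalerN scalerA mulfV ?gt_eqF // scale1r.
exists (x + u), c; split; last by rewrite lc addrK.
apply: maximal_monotone_related => // p v Bpv.
have := hu (p - x) (lam *: v) (ex_intro _ p (ex_intro _ v (conj Bpv (conj erefl erefl)))).
rewrite -[u]opprK -lc -scalerBr opprD addrA (ipZl hip).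
by rewrite pmulr_rge0.
Qed.

Lemma resolvent_nonexpansive lam x1 x2 y1 y2 : monotone_setop ip B -> 0 < lam ->
  resolvent_rel B lam x1 y1 -> resolvent_rel B lam x2 y2 ->
  `|y1 - y2| <= `|x1 - x2|.
Proof.
move=> Bm l0 [c1 [h1 ->]] [c2 [h2 ->]].
have -> : y1 + lam *: c1 - (y2 + lam *: c2) = (y1 - y2) + lam *: (c1 - c2).
  by rewrite scalerBr opprD !addrA; congr (_ + _); rewrite -!addrA; congr (_ + _); rewrite addrC.
set d := y1 - y2.
have h : `|d| ^+ 2 <= `|d + lam *: (c1 - c2)| * `|d|.
  apply: le_trans (ip_le_norm hip _ _).
  rewrite (ipDl hip) (ipZl hip) (ip_norm hip) lerDl.
  by apply: mulr_ge0; [exact: ltW | exact: Bm h1 h2].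
have [d0|dn0] := eqVneq `|d| 0; first by rewrite d0.
have dp : 0 < `|d| by rewrite lt_def dn0 normr_ge0.
by rewrite expr2 ler_pM2r in h.
Qed.

End Resolvent.

Lemma contraction_fixed_point {R : realType} {H : completeNormedModType R}
  (T : H -> H) (q : R) : 0 <= q < 1 ->
  (forall u v, `|T u - T v| <= q * `|u - v|) -> exists u, u = T u.
Proof.
move=> /andP[q0 q1] hT.
have hc : is_contraction (totalfun T : {fun [set: H] >-> [set: H]}).
  by exists (NngNum q0); split => // -[u v] /= _; exact: hT.
by have [u _ hu] := banach_fixed_point hc (@closedT _) (ex_intro _ 0 I); exists u.
Qed.

Lemma lipschitz_with_le {R : realType} {H : completeNormedModType R}
  (A : H -> H) L K : L <= K -> lipschitz_with L A -> lipschitz_with K A.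
Proof. by move=> LK hL u v; apply: le_trans (hL u v) (ler_wpM2r _ LK). Qed.

Lemma forward_backward_residual {R : realType} {H : completeNormedModType R}
  (A : H -> H) (B : H -> set H) L lam w y :
  0 < lam -> lipschitz_with L A -> resolvent_rel B lam (w - lam *: A w) y ->
  exists b, B y b /\ `|b + A y| <= (lam^-1 + L) * `|w - y|.
Proof.
move=> l0 hL [b [Bb e]]; exists b; split => //.
have -> : b + A y = lam^-1 *: (w - y) + (A y - A w).
  rewrite -[b](scalerK (lt0r_neq0 l0)) -[lam *: b](addKr y) -e.
  rewrite (addrC (- y)) addrAC scalerBr scalerA mulVf ?gt_eqF // scale1r.
  by rewrite -addrA (addrC (- A w)).
apply: le_trans (ler_normD _ _) _.
rewrite normrZ ger0_norm ?invr_ge0 ?(ltW l0) // mulrDl lerD2l distrC.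
exact: hL.
Qed.

Definition monotone_related_zero {R : realType} {H : completeNormedModType R}
  (ip : H -> H -> R) (A : H -> H) (B : H -> set H) (z : H) : Prop :=
  forall u v, B u v -> 0 <= ip (v + A u) (u - z).

Section SumZero.
Context {R : realType} {H : completeNormedModType R} {ip : H -> H -> R}.
Hypothesis hip : is_inner_product ip.

(* The fixed point [u = J (z - lam A u)] of a contraction satisfies
   [z - u \in lam (A + B) u]; testing the relatedness hypothesis at [u]
   forces [u = z]. *)
Lemma zeros_sum_of_related (A : H -> H) (B : H -> set H) L z :
  0 < L -> lipschitz_with L A -> maximal_monotone ip B ->
  monotone_related_zero ip A B z -> zeros_sum A B z.
Proof.
move=> L0 hL hB hz.
pose lam := (2 * L)^-1.
have l0 : 0 < lam by rewrite invr_gt0 mulr_gt0.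
have /choice[J hJ] : forall x, exists y, resolvent_rel B lam x y.
  by move=> x; exact: (maximal_monotone_resolvent hip).
pose T u := J (z - lam *: A u).
have [||u hu] := @contraction_fixed_point _ _ T 2^-1.
- by rewrite invr_ge0 ler0n /= invf_lt1 ?ltr1n.
- move=> u v.
  apply: le_trans (resolvent_nonexpansive hip hB.1 l0 (hJ _) (hJ _)) _.
  rewrite opprB addrC addrA subrK -scalerBr normrZ (ger0_norm (ltW l0)) distrC.
  apply: le_trans (ler_wpM2l (ltW l0) (hL u v)) _.
  by rewrite mulrA /lam invfM -(mulrA 2^-1) mulVf ?gt_eqF // mulr1.
have [c [Bc e]] := hJ (z - lam *: A u); rewrite -/(T u) -hu in Bc e.
have hc : c + A u = lam^-1 *: (z - u).
  have ez : z = u + lam *: c + lam *: A u by rewrite -e subrK.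
  have -> : z - u = lam *: (c + A u).
    by apply/eqP; rewrite subr_eq ez scalerDr [X in _ == X]addrC addrA.
  by rewrite scalerA mulVf ?gt_eqF // scale1r.
have := hz u c Bc.
rewrite hc (ipZl hip) -opprB (ipNl hip) (ip_norm hip) mulrN oppr_ge0.
rewrite pmulr_rle0 ?invr_gt0 ?mulr_gt0 // => h.
have zu : z = u.
  have : `|u - z| ^+ 2 == 0 by rewrite eq_le h sqr_ge0.
  by rewrite expf_eq0 /= normr_eq0 subr_eq0 eq_sym => /eqP.
by rewrite zu; exists c; split; rewrite // addrC hc zu subrr scaler0.
Qed.

End SumZero.

Section WeakLimit.
Context {R : realType} {H : completeNormedModType R} {ip : H -> H -> R}.
Hypothesis hip : is_inner_product ip.
Variables (A : H -> H) (B : H -> set H).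
Hypotheses (hAm : monotone_op ip A) (hBm : monotone_setop ip B).

Lemma related_up_to_residual K M u v w y b :
  B u v -> B y b -> `|b + A y| <= K * `|w - y| -> `|w - y| <= 1 -> `|w| <= M ->
  0 <= ip (v + A u) (u - w) + (`|v + A u| + K * (`|u| + M + 1)) * `|w - y|.
Proof.
move=> Buv Byb hb d1 wM.
set g := v + A u; set e := b + A y; set d := w - y.
have mono : ip e (u - y) <= ip g (u - y).
  have -> : g = e + ((v - b) + (A u - A y)).
    by rewrite /g /e addrACA [b + _]addrC subrK [A y + _]addrC subrK.
  by rewrite (ipDl hip) lerDl (ipDl hip) addr_ge0 // ?hAm //; exact: hBm.
have uy : u - y = (u - w) + d by rewrite /d addrA subrK.
have nuy : `|u - y| <= `|u| + M + 1.
  rewrite uy; apply: le_trans (ler_normD _ _) _; apply: lerD => //.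
  by apply: le_trans (ler_normB _ _) _; apply: lerD.
have he : `|e| * `|u - y| <= K * `|d| * (`|u| + M + 1) by apply: ler_pM.
have hg : ip g (u - y) <= ip g (u - w) + `|g| * `|d|.
  by rewrite uy (ipDr hip) lerD2l (ip_le_norm hip).
have := ip_ge_Nnorm hip e (u - y); lra.
Qed.

Lemma weak_limit_related L c M (w y : nat -> H) (lam : nat -> R) z :
  lipschitz_with L A -> 0 < c -> (forall n, (1 <= n)%N -> c <= lam n) ->
  (forall n, `|w n| <= M) ->
  (forall n, (1 <= n)%N ->
     resolvent_rel B (lam n) (w n - lam n *: A (w n)) (y n)) ->
  (fun n => `|w n - y n|) @ \oo --> 0 ->
  weakly_converges ip w z ->
  monotone_related_zero ip A B z.
Proof.
move=> hL c0 hc hM hy hd hwz u v Buv.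
set K := c^-1 + L.
set C := `|v + A u| + K * (`|u| + M + 1).
have lim : (fun n => ip (v + A u) (u - w n) + C * `|w n - y n|) @ \oo -->
    ip (v + A u) (u - z).
  rewrite -[X in _ --> X]addr0 -(mulr0 C); apply: cvgD; last exact: cvgMl_tmp.
  rewrite (ipBr hip); under eq_fun do rewrite (ipBr hip).
  apply: cvgB; first exact: cvg_cst.
  rewrite (ip_sym hip); under eq_fun do rewrite (ip_sym hip).
  exact: hwz.
apply: (cvgr_to_ge lim).
have d1 : \forall n \near \oo, `|w n - y n| <= 1.
  move/cvgr_dist_le : hd => /(_ _ ltr01).
  by apply: filterS => n; rewrite sub0r normrN normr_id.
near=> n.
have n1 : (1 <= n)%N by near: n; exists 1%N.
have lp : 0 < lam n by apply: lt_le_trans c0 (hc n n1).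
have [b [Bb hb]] := forward_backward_residual lp hL (hy n n1).
apply: (related_up_to_residual Buv Bb) => //; last by near: n.
apply: le_trans hb _; rewrite ler_wpM2r // lerD2r.
by rewrite lef_pV2 ?posrE // hc.
Unshelve. all: end_near.
Qed.

End WeakLimit.

Lemma stepsize_ge_min {R : realType} {H : completeNormedModType R}
  (A : H -> H) L mu lam1 (mus p : nat -> R) (w y : nat -> H) (lam : nat -> R) :
  0 < L -> lipschitz_with L A -> 0 < mu ->
  (forall n, 0 <= p n) -> (forall n, 0 <= mus n) ->
  lam 1%N = lam1 ->
  (forall n, (1 <= n)%N ->
     lam n.+1 = if A (w n) != A (y n) then
       Num.min ((mus n + mu) * `|w n - y n| / `|A (w n) - A (y n)|) (lam n + p n)
     else lam n + p n) ->
  forall n, (1 <= n)%N -> Num.min lam1 (mu / L) <= lam n.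
Proof.
move=> L0 hL mu0 hp hmus hl1 hlam.
elim=> [//|[_ _|n IH _]]; first by rewrite hl1 ge_min lexx.
have lnp : Num.min lam1 (mu / L) <= lam n.+1 + p n.+1.
  by apply: le_trans (IH isT) _; rewrite lerDl.
rewrite hlam //; case: ifP => // hA.
rewrite le_min lnp andbT ge_min; apply/orP; right.
have bn : 0 < `|A (w n.+1) - A (y n.+1)| by rewrite normr_gt0 subr_eq0 hA.
rewrite ler_pdivlMr // mulrAC ler_pdivrMr //.
apply: le_trans (ler_wpM2l (ltW mu0) (hL _ _)) _.
by rewrite mulrA [leRHS]mulrAC !ler_wpM2r ?(ltW L0) // lerDr.
Qed.

Theorem lemma3p3 (R : realType) (H : completeNormedModType R)
  (ip : H -> H -> R) (A : H -> H) (B : H -> set H) (L : R)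
  (mu lam1 : R) (alpha beta theta mus p : nat -> R)
  (x w z y : nat -> H) (lam : nat -> R) (zlim : H) :
  is_inner_product ip ->
  (* (C1) *) zeros_sum A B !=set0 ->
  (* (C2) *) lipschitz_with L A -> monotone_op ip A -> maximal_monotone ip B ->
  0 < mu < 1 -> 0 < lam1 ->
  (forall n, 0 <= p n) -> (forall n, 0 <= mus n) ->
  cvg (series p @ \oo) ->
  (* Algorithm 3.1 *)
  lam 1%N = lam1 ->
  (forall n, (1 <= n)%N -> w n = x n + alpha n *: (x n - x n.-1)) ->
  (forall n, (1 <= n)%N -> z n = x n + beta n *: (x n - x n.-1)) ->
  (forall n, (1 <= n)%N ->
     resolvent_rel B (lam n) (w n - lam n *: A (w n)) (y n)) ->
  (forall n, (1 <= n)%N ->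
     lam n.+1 = if A (w n) != A (y n) then
       Num.min ((mus n + mu) * `|w n - y n| / `|A (w n) - A (y n)|) (lam n + p n)
     else lam n + p n) ->
  (* the algorithm does not stop *)
  (forall n, (1 <= n)%N -> w n != y n) ->
  (forall n, (1 <= n)%N ->
     x n.+1 = (1 - theta n) *: z n + theta n *: (y n - lam n *: (A (y n) - A (w n)))) ->
  (* hypotheses of the lemma *)
  (fun n => `|w n - y n|) @ \oo --> 0 ->
  weakly_converges ip w zlim ->
  zeros_sum A B zlim.
Proof.
move=> hip _ hL hAm hB /andP[mu0 _] l10 hp hmus _ hl1 _ _ hy hlam _ _ hd hwz.
pose K := Num.max L 1.
have K0 : 0 < K by rewrite lt_max ltr01 orbT.
have hK : lipschitz_with K A by apply: lipschitz_with_le hL; rewrite le_max lexx.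
apply: (zeros_sum_of_related hip K0 hK hB).
have c0 : 0 < Num.min lam1 (mu / K) by rewrite lt_min l10 divr_gt0.
have hc := stepsize_ge_min K0 hK mu0 hp hmus hl1 hlam.
have [M hM] := weakly_converges_bounded hip hwz.
exact: (weak_limit_related hip hAm hB.1 hK c0 hc hM hy hd hwz).
Qed.
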